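(* Let $R$ be a pre-Schreier domain and let $a_1,\dots,a_n\in\operatorname{Sqf} R$ be such that $a_i$ and $a_j$ are relatively prime for all $i\neq j$. Then $a_1a_2\cdots a_n\in\operatorname{Sqf} R$.
   Context: A domain is a commutative ring with identity without zero divisors. A domain $R$ is pre-Schreier if every non-zero $a\in R$ is primal: whenever $a\mid bc$ with $b,c\in R$, there exist $a_1,a_2\in R$ with $a=a_1a_2$, $a_1\mid b$ and $a_2\mid c$. Elements $a,b$ are relatively prime if they have no common non-invertible divisor. $R^{\ast}$ denotes the set of invertible elements of $R$. An element $a\in R$ is square-free if it cannot be written as $a=b^2c$ with $b\in R\setminus R^{\ast}$ and $c\in R$; $\operatorname{Sqf} R$ denotes the set of square-free elements of $R$. *)

From mathcomp Require Import all_boot all_algebra.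
Set Implicit Arguments. Unset Strict Implicit. Unset Printing Implicit Defensive.
Import GRing.Theory.
Local Open Scope ring_scope.

Definition rdvd (R : idomainType) (a b : R) : Prop := exists k : R, b = a * k.

Definition primal (R : idomainType) (a : R) : Prop :=
  forall b c : R, rdvd a (b * c) ->
    exists a1 a2 : R, a = a1 * a2 /\ rdvd a1 b /\ rdvd a2 c.

Definition pre_schreier (R : idomainType) : Prop :=
  forall a : R, a != 0 -> primal a.

Definition rel_prime (R : idomainType) (a b : R) : Prop :=
  forall d : R, rdvd d a -> rdvd d b -> d \is a GRing.unit.

Definition square_free (R : idomainType) (a : R) : Prop :=
  ~ exists b c : R, b \isn't a GRing.unit /\ a = b ^+ 2 * c.

From mathcomp Require Import all_boot all_algebra.
From mathcomp Require Import ring.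
Set Implicit Arguments. Unset Strict Implicit.
Local Open Scope ring_scope.
Import GRing.Theory.

(* Suppose x y = b^2 c with x, y square-free and relatively prime.  As b is
   primal, it splits as b = b1 b2 with b1 | x and b2 | y, and then b1^2 | x y.
   Writing x = b1 k, this says b1 | k y; splitting b1 once more over k and y,
   the factor dividing y also divides x, so it is a unit, hence b1 | k and
   b1^2 | x, forcing b1 to be a unit.  Likewise b2, so b is a unit.  For a
   finite product, pre-Schreier also makes relative primality multiplicative,
   so each factor is relatively prime to the product of the others. *)

Section Divisibility.

Variable R : idomainType.

Lemma rdvd_trans (a b c : R) : rdvd a b -> rdvd b c -> rdvd a c.
Proof. by move=> [k ->] [l ->]; exists (k * l); rewrite mulrA. Qed.

Lemma rdvd_mulr (a b : R) : rdvd a (a * b).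
Proof. by exists b. Qed.

Lemma rdvd_mull (a b : R) : rdvd b (a * b).
Proof. by exists a; rewrite mulrC. Qed.

Lemma rel_primeC (a b : R) : rel_prime a b -> rel_prime b a.
Proof. by move=> rab d db da; apply: rab. Qed.

Lemma rel_prime1 (a : R) : rel_prime a 1.
Proof. by move=> d _ [k /esym dk1]; apply/unitrP; exists k; rewrite mulrC. Qed.

Lemma square_free_neq0 (a : R) : square_free a -> a != 0.
Proof.
by move=> sa; apply/eqP=> a0; apply: sa; exists 0, 0; rewrite unitr0 a0 mulr0.
Qed.

Lemma square_free1 : square_free (1 : R).
Proof.
move=> [b [c [/negP bN E]]]; apply: bN; apply/unitrP.
by exists (b * c); rewrite E expr2; split; ring.
Qed.

End Divisibility.

Section PreSchreier.

Variables (R : idomainType) (preSchreierR : pre_schreier R).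

Lemma rel_primeM (x b c : R) :
  rel_prime x b -> rel_prime x c -> rel_prime x (b * c).
Proof.
move=> xb xc d; have [-> dx dbc|d0 dx dbc] := eqVneq d 0.
  case: dbc => k /eqP; rewrite mul0r mulf_eq0 => /orP[/eqP b0 | /eqP c0].
    by apply: xb; last by exists 0; rewrite b0 mul0r.
  by apply: xc; last by exists 0; rewrite c0 mul0r.
have [d1 [d2 [dE [d1b d2c]]]] := preSchreierR d0 dbc.
rewrite dE unitrM in dx *; apply/andP; split.
  by apply: xb => //; apply: (rdvd_trans _ dx); apply: rdvd_mulr.
by apply: xc => //; apply: (rdvd_trans _ dx); apply: rdvd_mull.
Qed.

Lemma rel_prime_prod (I : eqType) (r : seq I) (x : R) (f : I -> R) :
  {in r, forall i, rel_prime x (f i)} -> rel_prime x (\prod_(i <- r) f i).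
Proof.
move=> xf; rewrite big_seq.
by apply: big_ind => //; [apply: rel_prime1 | apply: rel_primeM].
Qed.

Lemma square_free_unit (x y d : R) : square_free x -> rel_prime x y ->
  rdvd d x -> rdvd (d ^+ 2) (x * y) -> d \is a GRing.unit.
Proof.
move=> sx xy [k xE] [m xyE].
have d0 : d != 0.
  by apply: contraNneq (square_free_neq0 sx) => d0; rewrite xE d0 mul0r.
have kyE : k * y = d * m.
  by apply: (mulfI d0); rewrite mulrA -xE xyE expr2 mulrA.
have [e1 [e2 [dE [[u kE] e2y]]]] := preSchreierR d0 (ex_intro _ m kyE).
have e2_unit : e2 \is a GRing.unit.
  apply: xy e2y; exists (e1 * k); rewrite xE dE; ring.
apply: contraT => dN; exfalso; apply: sx; exists d, (e2^-1 * u); split=> //.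
have e1E : e1 = d * e2^-1 by rewrite dE mulrK.
by rewrite xE kE e1E expr2; ring.
Qed.

Lemma square_freeM (x y : R) : square_free x -> square_free y ->
  rel_prime x y -> square_free (x * y).
Proof.
move=> sx sy xy [b [c [/negP bN xyE]]]; apply: bN.
have b0 : b != 0.
  apply: contraNneq (mulf_neq0 (square_free_neq0 sx) (square_free_neq0 sy)).
  by move=> b0; rewrite xyE b0 expr2 !mul0r.
have bxy : rdvd b (x * y) by exists (b * c); rewrite xyE expr2 mulrA.
have [b1 [b2 [bE [b1x b2y]]]] := preSchreierR b0 bxy.
have sq_dvd d : rdvd d b -> rdvd (d ^+ 2) (x * y).
  by move=> [k bk]; exists (k ^+ 2 * c); rewrite xyE bk exprMn mulrA.
have b1_unit : b1 \is a GRing.unit.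
  apply: (square_free_unit sx xy b1x).
  by apply: sq_dvd; rewrite bE; apply: rdvd_mulr.
have b2_unit : b2 \is a GRing.unit.
  apply: (square_free_unit sy (rel_primeC xy) b2y); rewrite mulrC.
  by apply: sq_dvd; rewrite bE; apply: rdvd_mull.
by rewrite bE unitrM b1_unit b2_unit.
Qed.

Lemma square_free_prod (I : eqType) (r : seq I) (a : I -> R) : uniq r ->
  {in r, forall i, square_free (a i)} ->
  {in r &, forall i j, i != j -> rel_prime (a i) (a j)} ->
  square_free (\prod_(i <- r) a i).
Proof.
elim: r => [|i r IHr] /=; first by rewrite big_nil => *; apply: square_free1.
move=> /andP[iNr r_uniq] sa ra; rewrite big_cons.
have r_sub : {subset r <= i :: r} by move=> j jr; rewrite inE jr orbT.
apply: square_freeM; first by apply: sa; rewrite mem_head.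
  by apply: IHr => //; [apply: sub_in1 sa | apply: sub_in2 ra].
apply: rel_prime_prod => j jr.
apply: ra; [exact: mem_head | exact: r_sub | by apply: contraNneq iNr => ->].
Qed.

End PreSchreier.

Theorem lemma2 (R : idomainType) (n : nat) (a : 'I_n -> R) :
  pre_schreier R ->
  (forall i, square_free (a i)) ->
  (forall i j, i != j -> rel_prime (a i) (a j)) ->
  square_free (\prod_(i < n) a i).
Proof.
move=> preSchreierR sa ra.
apply: (square_free_prod preSchreierR) => [|i _|i j _ _].
- exact: index_enum_uniq.
- exact: sa.
- exact: ra.
Qed.
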